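(* Let $f=p/q$ be a rational function, $p,q$ of degree $l$, positive on the standard simplex $\Delta$, with $b_\alpha(q,j,\Delta)>0$ for all $|\alpha|=j$, $j\ge l$, and with $p$ positive on $\Delta$; let $\underline p=\min_\Delta p$. If \[ k>\frac{l(l-1)}{2}\,\frac{\max_{|\alpha|=l}|b_\alpha(p,l,\Delta)|}{\underline p}, \] then $f$ satisfies the global certificate of positivity $\mathrm{Cert}(b(f,k,\Delta))$: $b_\alpha(f,k,\Delta)\ge0$ for all $|\alpha|=k$ and $b_{k\hat e_i}(f,k,\Delta)>0$ for $i=0,\dots,n$.
   Context: $\Delta$ is the standard simplex in $\mathbb{R}^n$ with barycentric coordinates $\lambda=(1-\sum x_i,x_1,\dots,x_n)$; $B^{(k)}_\alpha=\frac{k!}{\alpha_0!\cdots\alpha_n!}\lambda^\alpha$ ($\alpha\in\mathbb{N}^{n+1}$, $|\alpha|=k$); $b_\alpha(p,k,\Delta)$ are the Bernstein coefficients of $p$ of degree $k$; $b_\alpha(f,k,\Delta)=b_\alpha(p,k,\Delta)/b_\alpha(q,k,\Delta)$; $\hat e_i$ unit vectors of $\mathbb{R}^{n+1}$. *)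

From HB Require Import structures.
From mathcomp Require Import all_boot all_order all_algebra.
Set Implicit Arguments. Unset Strict Implicit. Unset Printing Implicit Defensive.
Import Order.TTheory GRing.Theory Num.Theory.
Local Open Scope ring_scope.

(* Multi-indices alpha in N^{n+1} with entries <= k (those with |alpha| = k
   are selected by [mdeg alpha == k]). Index 0 corresponds to lambda_0. *)
Definition mindex (n k : nat) := {ffun 'I_n.+1 -> 'I_k.+1}.

Definition mdeg (n k : nat) (a : mindex n k) : nat := (\sum_i (a i : nat))%N.

Definition mvertex (n k : nat) (i : 'I_n.+1) : mindex n k :=
  [ffun j => if j == i then ord_max else ord0].

Definition bary (R : ringType) (n : nat) (x : 'rV[R]_n) (i : 'I_n.+1) : R :=
  match unlift ord0 i with
  | None => 1 - \sum_(j < n) x ord0 j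
  | Some j => x ord0 j
  end.

Definition in_simplex (R : realFieldType) (n : nat) (x : 'rV[R]_n) : Prop :=
  (forall j, 0 <= x ord0 j) /\ \sum_(j < n) x ord0 j <= 1.

Definition bernstein (R : fieldType) (n k : nat) (a : mindex n k)
    (lam : 'I_n.+1 -> R) : R :=
  (k`!)%:R / (\prod_i ((a i : nat)`!))%:R * \prod_i lam i ^+ (a i : nat).

(* [b] is the family of Bernstein coefficients of degree k of p on the
   standard simplex: p = sum_{|alpha|=k} b_alpha B^{(k)}_alpha (as functions,
   i.e. a polynomial identity). By linear independence of the Bernstein basis
   such b is unique, so this characterizes b_alpha(p,k,Delta). *)
Definition bernstein_coeffs (R : realFieldType) (n k : nat)
    (p : 'rV[R]_n -> R) (b : mindex n k -> R) : Prop :=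
  forall x : 'rV[R]_n,
    p x = \sum_(a : mindex n k | mdeg a == k) b a * bernstein a (bary x).

Definition is_min_on_simplex (R : realFieldType) (n : nat)
    (p : 'rV[R]_n -> R) (m : R) : Prop :=
  (exists2 x, in_simplex x & p x = m) /\ (forall x, in_simplex x -> m <= p x).

From HB Require Import structures.
From mathcomp Require Import all_boot all_order all_algebra.
From mathcomp Require Import ring lra zify.
Set Implicit Arguments. Unset Strict Implicit. Unset Printing Implicit Defensive.
Import Order.TTheory GRing.Theory Num.Theory.
Local Open Scope ring_scope.

(* Write B^m_a(lam) for the Bernstein polynomial of degree m.
   1. Degree elevation: for l <= m, sum_{|b|=l} c_b B^l_b =
      sum_{|a|=m} (sum_{|b|=l} c_b W^m(a,b)) B^m_a, where the weights
      W^m(a,b) = prod_i C(a_i,b_i) / C(m,l) come from multiplying by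
      (sum_i lam_i)^(m-l) one degree at a time; they are >= 0 and sum to 1.
   2. Uniqueness: the Bernstein coefficients of degree k of a polynomial
      function are unique (a homogenisation argument reduces this to the
      identity theorem for polynomials over an infinite field), so
      b_a(p,k) = sum_b b_b(p,l) W^k(a,b).
   3. Comparison at grid points: at x = a/k one has
      B^l_b(a/k) >= c W^k(a,b) with c = k^_l / k^l >= 1 - l(l-1)/(2k), hence
      c b_a(p,k) >= p(a/k) - M (1 - c) >= pmin - M l(l-1)/(2k) > 0, where M
      bounds the |b_b(p,l)|.
   4. Since the coefficients of q are positive, every quotient
      b_a(p,k)/b_a(q,k) is positive, which is the certificate. *)

(* Identity theorem for polynomial functions on the realFieldType R. *)
Section PolynomialIdentity.
Variable R : realFieldType.

(* A univariate polynomial function of degree <= K vanishing everywhere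
   except possibly at t0 has zero coefficients (it has infinitely many roots). *)
Lemma coefs_eq0_of_roots (K : nat) (c : 'I_K.+1 -> R) (t0 : R) :
  (forall t, t != t0 -> \sum_(j < K.+1) c j * t ^+ j = 0) -> forall j, c j = 0.
Proof.
move=> vanish j.
pose P := \poly_(i < K.+1) c (inord i).
have hornerP t : P.[t] = \sum_(j < K.+1) c j * t ^+ j.
  by rewrite horner_poly; apply: eq_bigr => i _; rewrite inord_val.
suff P0 : P = 0.
  have := congr1 (fun q : {poly R} => q`_j) P0.
  by rewrite coef_poly ltn_ord coef0 inord_val.
apply/eqP; apply: contraT => nzP.
pose rs := mkseq (fun i => t0 + (i.+1)%:R) K.+1.
have rs_roots : all (root P) rs.
  apply/allP => x /mapP [i _ ->]; rewrite /root hornerP vanish //.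
  by rewrite -subr_eq0 addrC addKr pnatr_eq0.
have rs_uniq : uniq rs.
  rewrite map_inj_uniq ?iota_uniq // => a b /addrI /eqP.
  by rewrite eqr_nat eqSS => /eqP.
have := max_poly_roots nzP rs_roots rs_uniq; rewrite size_mkseq => h.
by have := leq_trans h (size_poly _ _); rewrite ltnn.
Qed.

Definition vcons m (t : R) (y : 'I_m -> R) : 'I_m.+1 -> R :=
  fun i => match unlift ord0 i with None => t | Some j => y j end.

Definition fcons (T : Type) m (j : T) (a : {ffun 'I_m -> T}) : {ffun 'I_m.+1 -> T} :=
  [ffun i => match unlift ord0 i with None => j | Some i' => a i' end].

Definition ftail (T : Type) m (a : {ffun 'I_m.+1 -> T}) : {ffun 'I_m -> T} :=
  [ffun i => a (lift ord0 i)].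

Lemma fcons_head_tail T m (a : {ffun 'I_m.+1 -> T}) : fcons (a ord0) (ftail a) = a.
Proof.
apply/ffunP => i; rewrite /fcons /ftail ffunE.
by case: unliftP => [i' -> | ->]; rewrite ?ffunE.
Qed.

Lemma sum_ffun_cons (T : finType) m (F : {ffun 'I_m.+1 -> T} -> R) :
  \sum_a F a = \sum_(j : T) \sum_(a : {ffun 'I_m -> T}) F (fcons j a).
Proof.
rewrite pair_big /=.
rewrite (reindex (fun p : T * {ffun 'I_m -> T} => fcons p.1 p.2)) //.
exists (fun a : {ffun 'I_m.+1 -> T} => (a ord0, ftail a)) => [[j a] _ | a _] /=.
  rewrite /fcons /ftail ffunE unlift_none; congr pair.
  by apply/ffunP => i; rewrite !ffunE liftK.
exact: fcons_head_tail.
Qed.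

Lemma prod_vcons K m (t : R) (y : 'I_m -> R) (j : 'I_K.+1)
    (a : {ffun 'I_m -> 'I_K.+1}) :
  \prod_(i < m.+1) vcons t y i ^+ fcons j a i = t ^+ j * \prod_(i < m) y i ^+ a i.
Proof.
rewrite big_ord_recl /vcons /fcons ffunE unlift_none; congr (_ * _).
by apply: eq_bigr => i _; rewrite ffunE liftK.
Qed.

Lemma coef_slice_eq0 K m (E : {ffun 'I_m.+1 -> 'I_K.+1} -> R)
    (t0 : ('I_m -> R) -> R) :
  (forall t y, t != t0 y -> \sum_a E a * \prod_(i < m.+1) vcons t y i ^+ a i = 0) ->
  forall j y, \sum_(a : {ffun 'I_m -> 'I_K.+1}) E (fcons j a) * \prod_(i < m) y i ^+ a i = 0.
Proof.
move=> vanish j y.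
apply: (@coefs_eq0_of_roots K (fun j => \sum_(a : {ffun 'I_m -> 'I_K.+1})
  E (fcons j a) * \prod_(i < m) y i ^+ a i) (t0 y)) => t /vanish.
rewrite sum_ffun_cons => vanish_t; rewrite -[RHS]vanish_t.
apply: eq_bigr => i _.
rewrite mulr_suml; apply: eq_bigr => a _.
by rewrite prod_vcons mulrCA mulrC.
Qed.

Lemma mpoly_coefs_eq0 K m (E : {ffun 'I_m -> 'I_K.+1} -> R) :
  (forall y : 'I_m -> R, \sum_a E a * \prod_(i < m) y i ^+ a i = 0) ->
  forall a, E a = 0.
Proof.
elim: m E => [|m IH] E vanish a.
  have := vanish (fun _ => 0).
  rewrite (big_pred1 a) ?big_ord0 ?mulr1 // => b /=.
  by apply/esym/eqP/ffunP => -[].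
rewrite -(fcons_head_tail a).
apply: (IH (fun a' => E (fcons (a ord0) a'))) => y.
by apply: (coef_slice_eq0 (t0 := fun _ => 0)) => t y' _; exact: vanish.
Qed.

Lemma mpoly_coefs_eq0_generic K m (E : {ffun 'I_m.+1 -> 'I_K.+1} -> R)
    (t0 : ('I_m -> R) -> R) :
  (forall t y, t != t0 y -> \sum_a E a * \prod_(i < m.+1) vcons t y i ^+ a i = 0) ->
  forall a, E a = 0.
Proof.
move=> vanish a; rewrite -(fcons_head_tail a).
apply: (mpoly_coefs_eq0 (E := fun a' => E (fcons (a ord0) a'))) => y.
exact: coef_slice_eq0 vanish _ _.
Qed.

End PolynomialIdentity.

(* Bernstein polynomials and one step of degree elevation.  Multi-indices
   live in mindex n K for a fixed bound K, so that all degrees m <= K can be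
   handled in the same index type. *)
Section DegreeElevation.
Variables (R : realFieldType) (n K : nat).
Implicit Types a b : mindex n K.

(* The Bernstein polynomial of degree m attached to a (meaningful when
   mdeg a = m); by definition [bernstein a] is [bern K a]. *)
Definition bern (m : nat) a (lam : 'I_n.+1 -> R) : R :=
  (m`!)%:R / (\prod_i ((a i : nat)`!))%:R * \prod_i lam i ^+ (a i : nat).

(* a + e_i and a - e_i (truncated at K and at 0). *)
Definition incr a (i : 'I_n.+1) : mindex n K :=
  [ffun j => if j == i then inord (a j).+1 else a j].
Definition decr a (i : 'I_n.+1) : mindex n K :=
  [ffun j => if j == i then inord (a j).-1 else a j].

Lemma incrE a i j : (a i < K)%N -> (incr a i j : nat) = (a j + (j == i))%N.
Proof.
move=> h; rewrite ffunE; case: eqP => [->|_]; last by rewrite addn0.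
by rewrite inordK ?addn1.
Qed.

Lemma decrE a i j : (decr a i j : nat) = (a j - (j == i))%N.
Proof.
rewrite ffunE; case: eqP => [->|_]; last by rewrite subn0.
by rewrite inordK ?subn1 // (leq_ltn_trans (leq_pred _) (ltn_ord _)).
Qed.

Lemma mdeg_incr a i : (a i < K)%N -> mdeg (incr a i) = (mdeg a).+1.
Proof.
move=> h; rewrite /mdeg (bigD1 i) //= [in RHS](bigD1 i) //= incrE // eqxx.
rewrite addn1 addSn; do 2 f_equal.
by apply: eq_bigr => j /negbTE hj; rewrite incrE // hj addn0.
Qed.

Lemma decr_incr a i : (a i < K)%N -> decr (incr a i) i = a.
Proof.
by move=> h; apply/ffunP => j; apply: val_inj; rewrite /= decrE incrE // addnK.
Qed.

Lemma incr_decr a i : (0 < a i)%N -> incr (decr a i) i = a.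
Proof.
move=> h; apply/ffunP => j; apply: val_inj => /=.
rewrite incrE ?decrE; last by rewrite eqxx subn1 -ltnS prednK // ltn_ord.
by case: eqP => [->|_]; rewrite ?subn1 ?addn1 ?prednK ?subn0 ?addn0.
Qed.

Lemma le_mdeg a i : (a i <= mdeg a)%N.
Proof. by rewrite /mdeg (bigD1 i) //= leq_addr. Qed.

Lemma prod_incr a i (G : 'I_n.+1 -> nat -> R) : (a i < K)%N ->
  \prod_j G j (incr a i j) = G i (a i).+1 * \prod_(j | j != i) G j (a j).
Proof.
move=> h; rewrite (bigD1 i) //= incrE // eqxx addn1; congr (_ * _).
by apply: eq_bigr => j /negbTE hj; rewrite incrE // hj addn0.
Qed.

Lemma bern_incr m a i lam : (a i < K)%N ->
  bern m a lam * lam i = ((a i).+1)%:R / (m.+1)%:R * bern m.+1 (incr a i) lam.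
Proof.
move=> h; rewrite /bern !natr_prod.
rewrite (prod_incr (fun j k => (k`!)%:R)) // (prod_incr (fun j k => lam j ^+ k)) //.
rewrite [\prod_j ((a j)`!)%:R](bigD1 i) //= [\prod_j lam j ^+ a j](bigD1 i) //=.
rewrite !factS !natrM exprS.
have h1 : ((a i)`!)%:R != 0 :> R by rewrite pnatr_eq0 -lt0n fact_gt0.
have h2 : \prod_(j | j != i) ((a j)`!)%:R != 0 :> R.
  by rewrite -natr_prod pnatr_eq0 -lt0n prodn_gt0 // => j; rewrite fact_gt0.
by field; rewrite h1 h2 ![1 + _]addrC !natr1 !pnatr_eq0.
Qed.

Lemma bern_elevate1 m (hm : (m < K)%N) (c : mindex n K -> R) lam :
  \sum_i lam i = 1 ->
  \sum_(a | mdeg a == m) c a * bern m a lam =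
  \sum_(a | mdeg a == m.+1)
    (\sum_i (a i)%:R / (m.+1)%:R * c (decr a i)) * bern m.+1 a lam.
Proof.
move=> lam_sum1.
transitivity (\sum_(a | mdeg a == m) \sum_i c a * (bern m a lam * lam i)).
  by apply: eq_bigr => a _; rewrite -!mulr_sumr lam_sum1 mulr1.
rewrite exchange_big /=.
under [RHS]eq_bigr do rewrite mulr_suml.
rewrite [RHS]exchange_big /=; apply: eq_bigr => i _.
rewrite [RHS](bigID (fun a => 0 < a i)%N) /= [X in _ = _ + X]big1 ?addr0; last first.
  by move=> a /andP[_]; rewrite -eqn0Ngt => /eqP ->; rewrite !mul0r.
rewrite [RHS](reindex_onto (fun b => incr b i) (fun a => decr a i)) /=; last first.
  by move=> a /andP[_ h]; rewrite incr_decr.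
have small b : mdeg b = m -> (b i < K)%N.
  by move=> hd; rewrite (leq_ltn_trans _ hm) // -hd le_mdeg.
apply: eq_big => b.
  have [hb|hb] := ltnP (b i) K.
    by rewrite mdeg_incr // incrE // eqxx addn1 decr_incr // eqxx !andbT eqSS.
  have -> : (incr b i i : nat) = 0%N.
    by rewrite ffunE eqxx /inord /insubd insubN // ltnS -ltnNge.
  rewrite andbF andFb; apply/negbTE; apply: contraTN hb => /eqP /small.
  by rewrite -ltnNge.
move=> /eqP /small hb.
by rewrite bern_incr // incrE // eqxx addn1 decr_incr // mulrCA mulrA.
Qed.

End DegreeElevation.

(* Iterated degree elevation from degree l to any degree m in [l, K]. *)
Section ElevationWeights.
Variables (R : realFieldType) (n K l : nat).
Implicit Types a b : mindex n K.

(* prod_i a_i^_b_i / b_i!  (= prod_i C(a_i, b_i)); it vanishes unless b <= a. *)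
Definition binom_prod a b : R :=
  \prod_i (((a i : nat) ^_ (b i : nat))%:R / ((b i : nat)`!)%:R).

Definition elev_weight (m : nat) a b : R := (l`!)%:R / (m ^_ l)%:R * binom_prod a b.

Lemma binom_prod_eq0 a b j : (a j < b j)%N -> binom_prod a b = 0.
Proof. by move=> h; rewrite /binom_prod (bigD1 j) //= ffact_small // !mul0r. Qed.

Lemma sum_subn a b : (forall j, b j <= a j)%N ->
  (\sum_j (a j - b j)%N)%N = (mdeg a - mdeg b)%N.
Proof.
move=> h; apply/eqP; rewrite -(eqn_add2r (mdeg b)) subnK; last first.
  by rewrite /mdeg; apply: leq_sum => j _; exact: h.
by rewrite /mdeg -big_split /=; apply/eqP/eq_bigr => j _; rewrite subnK.
Qed.

Lemma le_mindex_eq a b : (forall j, b j <= a j)%N -> mdeg a = mdeg b -> a = b.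
Proof.
move=> h e; have := sum_subn h; rewrite e subnn => /eqP; rewrite sum_nat_eq0.
move=> /forallP H; apply/ffunP => j; apply: val_inj; apply/eqP.
by rewrite eqn_leq h andbT -subn_eq0 (implyP (H j)).
Qed.

Lemma elev_weight_diag a b : mdeg a = l -> mdeg b = l -> elev_weight l a b = (a == b)%:R.
Proof.
move=> ha hb; have [<-|neq] := eqVneq a b.
  rewrite /elev_weight /binom_prod ffactnn divff ?pnatr_eq0 -?lt0n ?fact_gt0 //.
  by rewrite mul1r big1 // => i _; rewrite ffactnn divff // pnatr_eq0 -lt0n fact_gt0.
have [/forallP ble | ] := boolP [forall j, b j <= a j]%N.
  by case/eqP: neq; apply: le_mindex_eq => [j|]; [exact: ble | rewrite ha hb].
rewrite negb_forall => /existsP [j]; rewrite -ltnNge => h.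
by rewrite /elev_weight (binom_prod_eq0 h) mulr0.
Qed.

Lemma ffact_pred (x y : nat) : (x * (x.-1) ^_ y = (x - y) * x ^_ y)%N.
Proof.
case: x => [|x] /=; first by rewrite !mul0n.
by rewrite -ffactSS ffactnSr mulnC.
Qed.

Lemma binom_prod_decr a b i :
  (a i)%:R * binom_prod (decr a i) b = (a i - b i)%:R * binom_prod a b.
Proof.
rewrite /binom_prod (bigD1 i) //= [X in _ = _ * X](bigD1 i) //= decrE eqxx subn1.
have -> : \prod_(j | j != i)
      (((decr a i j : nat) ^_ (b j : nat))%:R / ((b j : nat)`!)%:R)
    = \prod_(j | j != i) (((a j : nat) ^_ (b j : nat))%:R / ((b j : nat)`!)%:R) :> R.
  by apply: eq_bigr => j /negbTE hj; rewrite decrE hj subn0.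
by rewrite !mulrA -!natrM ffact_pred.
Qed.

Lemma elev_weight_step m a b : (l <= m)%N -> mdeg a = m.+1 -> mdeg b = l ->
  \sum_i (a i)%:R / (m.+1)%:R * elev_weight m (decr a i) b = elev_weight m.+1 a b.
Proof.
move=> hlm ha hb.
have hm0 : (m ^_ l)%:R != 0 :> R by rewrite pnatr_eq0 -lt0n ffact_gt0.
have hm1 : (m.+1)%:R != 0 :> R by rewrite pnatr_eq0.
transitivity (\sum_i (l`!)%:R / ((m ^_ l)%:R * (m.+1)%:R) *
                     ((a i - b i)%:R * binom_prod a b) : R).
  apply: eq_bigr => i _; rewrite -binom_prod_decr /elev_weight.
  by field; rewrite hm0 addrC natr1 hm1.
rewrite -mulr_sumr -mulr_suml.
have [/forallP ble|] := boolP [forall j, b j <= a j]%N; last first.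
  rewrite negb_forall => /existsP [j]; rewrite -ltnNge => h.
  by rewrite /elev_weight (binom_prod_eq0 h) !mulr0.
rewrite -natr_sum sum_subn // ha hb /elev_weight.
have e : (m ^_ l)%:R * (m.+1)%:R = (m.+1 ^_ l)%:R * (m.+1 - l)%:R :> R.
  by rewrite -!natrM -ffactnSr ffactSS mulnC.
have hl : (m.+1 - l)%:R != 0 :> R by rewrite pnatr_eq0 subn_eq0 -ltnNge ltnS.
have hm2 : (m.+1 ^_ l)%:R != 0 :> R.
  by rewrite pnatr_eq0 -lt0n ffact_gt0 (leq_trans hlm).
by rewrite e; field; rewrite hl hm2.
Qed.

Lemma bern_elevate (c : mindex n K -> R) lam m :
  \sum_i lam i = 1 -> (l <= m <= K)%N ->
  \sum_(b | mdeg b == l) c b * bern l b lam =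
  \sum_(a | mdeg a == m) (\sum_(b | mdeg b == l) c b * elev_weight m a b) * bern m a lam.
Proof.
move=> lam_sum1.
have diag a : mdeg a = l -> \sum_(b | mdeg b == l) c b * elev_weight l a b = c a.
  move=> ha; rewrite (bigD1 a) ?ha //= elev_weight_diag // eqxx mulr1 big1 ?addr0 //.
  by move=> b /andP[/eqP hb nb]; rewrite elev_weight_diag // eq_sym (negbTE nb) mulr0.
elim: m => [|m IH] /andP[hl hK].
  move: hl; rewrite leqn0 => /eqP hl0; rewrite hl0 in diag *.
  by apply: eq_bigr => a /eqP ha; rewrite diag.
have [hlm|hlm] := leqP l m; last first.
  have e : l = m.+1 by apply/eqP; rewrite eqn_leq hl hlm.
  by rewrite -[in RHS]e; apply: eq_bigr => a /eqP ha; rewrite diag.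
rewrite IH ?hlm ?(ltnW hK) // (bern_elevate1 hK) //.
apply: eq_bigr => a /eqP ha; congr (_ * _).
under eq_bigr do rewrite mulr_sumr.
rewrite exchange_big /=; apply: eq_bigr => b /eqP hb.
rewrite -(elev_weight_step hlm ha hb) mulr_sumr; apply: eq_bigr => i _.
by rewrite mulrCA.
Qed.

End ElevationWeights.

Section BernsteinBasis.
Variable R : realFieldType.

Lemma sum_bary n (x : 'rV[R]_n) : \sum_i bary x i = 1.
Proof.
have tail j : bary x (lift ord0 j) = x ord0 j by rewrite /bary liftK.
rewrite big_ord_recl; under eq_bigr do rewrite tail.
by rewrite /bary unlift_none subrK.
Qed.

Lemma bary_ge0 n (x : 'rV[R]_n) i : in_simplex x -> 0 <= bary x i.
Proof.
move=> [x_ge0 x_sum]; rewrite /bary; case: (unlift ord0 i) => [j|]; first exact: x_ge0.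
by rewrite subr_ge0.
Qed.

Lemma bern_ge0 n K m (a : mindex n K) (x : 'rV[R]_n) :
  in_simplex x -> 0 <= bern m a (bary x).
Proof.
move=> hx; rewrite /bern mulr_ge0 ?divr_ge0 ?ler0n //.
by apply: prodr_ge0 => i _; rewrite exprn_ge0 // bary_ge0.
Qed.

(* Linear independence of the Bernstein basis of degree K: homogenising by
   x = y / (t + sum y) turns the vanishing combination into a polynomial in
   (t, y) that vanishes off the hyperplane t + sum y = 0. *)
Lemma bern_coefs_unique n K (D : mindex n K -> R) :
  (forall x : 'rV[R]_n, \sum_(a | mdeg a == K) D a * bern K a (bary x) = 0) ->
  forall a, mdeg a == K -> D a = 0.
Proof.
move=> vanish a ha.
pose E (a : mindex n K) : R :=
  if mdeg a == K then D a * ((K`!)%:R / (\prod_i ((a i : nat)`!))%:R) else 0.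
have E0 : forall a, E a = 0.
  apply: (@mpoly_coefs_eq0_generic R K n E (fun y => - \sum_j y j)) => t y ht.
  set s := t + \sum_j y j.
  have s_neq0 : s != 0 by rewrite /s addr_eq0.
  pose x : 'rV[R]_n := \row_j (y j / s).
  have bary_x i : bary x i = vcons t y i / s.
    rewrite /bary /vcons; case: (unlift ord0 i) => [j|]; first by rewrite mxE.
    under eq_bigr do rewrite mxE.
    by rewrite -mulr_suml /s; field.
  transitivity (s ^+ K * \sum_(a | mdeg a == K) D a * bern K a (bary x)); last first.
    by rewrite vanish mulr0.
  rewrite mulr_sumr [RHS]big_mkcond /=; apply: eq_bigr => b _.
  rewrite /E; case: (boolP (mdeg b == K)) => [/eqP hd|_]; last by rewrite mul0r.
  rewrite /bern; under [X in _ = _ * (_ * (_ * X))]eq_bigr do rewrite bary_x expr_div_n.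
  rewrite prodf_div prodrXr -/(mdeg b) hd.
  have sK_neq0 : s ^+ K != 0 by rewrite expf_neq0.
  by rewrite [RHS]mulrC -!mulrA mulVf // mulr1.
have := E0 a; rewrite /E ha => /eqP; rewrite mulf_eq0 => /orP [/eqP //|].
rewrite mulf_eq0 invr_eq0 !pnatr_eq0 !eqn0Ngt fact_gt0 /= prodn_gt0 // => i.
by rewrite fact_gt0.
Qed.

Definition mzero n K : mindex n K := [ffun _ => ord0].

Lemma mdeg_eq0 n K (b : mindex n K) : (mdeg b == 0%N) = (b == mzero n K).
Proof.
apply/idP/eqP => [|->]; last by rewrite /mdeg big1 // => i _; rewrite ffunE.
rewrite /mdeg sum_nat_eq0 => /forallP b0; apply/ffunP => i; apply: val_inj.
by rewrite ffunE; apply/eqP; exact: (implyP (b0 i)).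
Qed.

(* The Bernstein polynomials of degree m form a partition of unity: this is
   the elevation of the constant 1 from degree 0 to degree m. *)
Lemma bern_partition_unity n K m (lam : 'I_n.+1 -> R) : (m <= K)%N ->
  \sum_i lam i = 1 -> \sum_(a : mindex n K | mdeg a == m) bern m a lam = 1.
Proof.
move=> hm lam_sum1.
have := @bern_elevate R n K 0 (fun _ => 1) lam m lam_sum1; rewrite hm => /(_ isT).
have zero_only : [pred b : mindex n K | mdeg b == 0%N] =1 pred1 (mzero n K).
  by move=> b; rewrite /= mdeg_eq0.
rewrite (eq_bigl _ _ zero_only) big_pred1_eq /bern /= big1 ?mul1r; last first.
  by move=> i _; rewrite ffunE.
rewrite big1 ?divr1 ?mul1r; last by move=> i _; rewrite ffunE.
rewrite invr1 mulr1 => one_eq; rewrite [RHS]one_eq; apply: eq_bigr => a _.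
rewrite (eq_bigl _ _ zero_only) big_pred1_eq.
have -> : elev_weight R 0 m a (mzero n K) = 1.
  rewrite /elev_weight /binom_prod ffactn0 divr1 mul1r big1 // => i _.
  by rewrite ffunE ffactn0 divr1.
by rewrite !mul1r.
Qed.

End BernsteinBasis.

(* Moving multi-indices between the index types mindex n l and mindex n k,
   so that the degree-l expansion of p can be elevated inside mindex n k. *)
Section Recast.
Variable R : realFieldType.

Definition recast n K1 K2 (a : mindex n K1) : mindex n K2 := [ffun i => inord (a i)].

Lemma recastE n K1 K2 (a : mindex n K1) i : (a i <= K2)%N -> (recast K2 a i : nat) = a i.
Proof. by move=> h; rewrite ffunE inordK. Qed.

Lemma mdeg_ext n K1 K2 (a : mindex n K1) (a' : mindex n K2) :
  (forall i, (a i : nat) = (a' i : nat)) -> mdeg a = mdeg a'.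
Proof. by move=> same; apply: eq_bigr => i _; rewrite same. Qed.

Lemma bern_ext n K1 K2 m (a : mindex n K1) (a' : mindex n K2) (lam : 'I_n.+1 -> R) :
  (forall i, (a i : nat) = (a' i : nat)) -> bern m a lam = bern m a' lam.
Proof.
move=> same; rewrite /bern; congr (_ / _ * _).
  by congr (_%:R); apply: eq_bigr => i _; rewrite same.
by apply: eq_bigr => i _; rewrite same.
Qed.

Lemma sum_bern_recast n l k (f : mindex n l -> R) (lam : 'I_n.+1 -> R) : (l <= k)%N ->
  \sum_(b : mindex n l | mdeg b == l) f b * bern l b lam =
  \sum_(b : mindex n k | mdeg b == l) f (recast l b) * bern l b lam.
Proof.
move=> hlk.
have le_k (b : mindex n l) i : (b i <= k)%N by rewrite (leq_trans _ hlk) // -ltnS.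
rewrite [RHS](reindex (@recast n l k)) /=; last first.
  exists (@recast n k l) => b hb.
    by apply/ffunP => i; apply: val_inj; rewrite /= !recastE // -ltnS.
  apply/ffunP => i; apply: val_inj => /=; move: hb; rewrite inE => /eqP hd.
  have hbi : (b i <= l)%N by rewrite -hd le_mdeg.
  by rewrite !recastE // (leq_trans hbi hlk).
apply: eq_big => b.
  by rewrite (@mdeg_ext _ _ _ (recast k b) b) // => i; rewrite recastE.
move=> _; rewrite (@bern_ext _ _ _ _ (recast k b) b); last by move=> i; rewrite recastE.
congr (f _ * _); apply/ffunP => i; apply: val_inj => /=.
by rewrite !recastE // -ltnS.
Qed.

End Recast.

Section GridPoints.
Variable R : realFieldType.

Definition grid_point n k (a : mindex n k) : 'rV[R]_n :=
  \row_j ((a (lift ord0 j) : nat)%:R / k%:R).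

Lemma bary_grid_point n k (a : mindex n k) i : (0 < k)%N -> mdeg a = k ->
  bary (grid_point a) i = (a i : nat)%:R / k%:R.
Proof.
move=> hk ha; case: (unliftP ord0 i) => [j ->|->]; first by rewrite /bary liftK mxE.
rewrite /bary unlift_none; under eq_bigr do rewrite mxE.
rewrite -mulr_suml -natr_sum.
have e : k%:R = (a ord0 : nat)%:R + (\sum_(j < n) (a (lift ord0 j) : nat))%:R :> R.
  by rewrite -natrD -[in LHS]ha /mdeg big_ord_recl.
have k_neq0 : k%:R != 0 :> R by rewrite pnatr_eq0 -lt0n.
by apply: (mulIf k_neq0); rewrite mulrBl mul1r !mulfVK // [in LHS]e addrK.
Qed.

Lemma grid_point_in_simplex n k (a : mindex n k) : (0 < k)%N -> mdeg a = k ->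
  in_simplex (grid_point a).
Proof.
move=> hk ha; split => [j|]; first by rewrite mxE divr_ge0 ?ler0n.
have := bary_grid_point ord0 hk ha; rewrite /bary unlift_none => e.
by rewrite -subr_ge0 e divr_ge0 ?ler0n.
Qed.

Lemma ffact_le_exp (x y : nat) : (x ^_ y <= x ^ y)%N.
Proof.
elim: y => [|y IH]; first by rewrite ffactn0.
by rewrite ffactnSr expnSr leq_mul // leq_subr.
Qed.

(* Comparison of B^l_b(a/k) with the elevation weight:
   (k^_l / k^l) W^k(a,b) <= B^l_b(a/k), since a_i^_b_i <= a_i^b_i. *)
Lemma elev_weight_le_bern n k l (a b : mindex n k) :
  (0 < k)%N -> (l <= k)%N -> mdeg a = k -> mdeg b = l ->
  (k ^_ l)%:R / k%:R ^+ l * elev_weight R l k a b <= bern l b (bary (grid_point a)).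
Proof.
move=> hk hlk ha hb.
have kl_neq0 : k%:R ^+ l != 0 :> R by rewrite expf_neq0 // pnatr_eq0 -lt0n.
have ff_neq0 : (k ^_ l)%:R != 0 :> R by rewrite pnatr_eq0 -lt0n ffact_gt0.
have fb_neq0 : (\prod_i ((b i : nat)`!))%:R != 0 :> R.
  by rewrite pnatr_eq0 -lt0n prodn_gt0 // => i; rewrite fact_gt0.
set coef := (l`!)%:R / ((\prod_i ((b i : nat)`!))%:R * k%:R ^+ l) : R.
have bern_grid : bern l b (bary (grid_point a)) =
    coef * (\prod_i ((a i : nat) ^ (b i : nat)))%:R.
  rewrite /bern; have -> : \prod_i bary (grid_point a) i ^+ b i =
      (\prod_i ((a i : nat) ^ (b i : nat)))%:R / k%:R ^+ l :> R.
    rewrite (eq_bigr (fun i => (a i : nat)%:R ^+ b i / k%:R ^+ b i)); last first.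
      by move=> i _; rewrite bary_grid_point // expr_div_n.
    rewrite prodf_div prodrXr -/(mdeg b) hb natr_prod.
    by congr (_ / _); apply: eq_bigr => i _; rewrite natrX.
  by rewrite /coef; field; rewrite fb_neq0 kl_neq0.
have weight_grid : (k ^_ l)%:R / k%:R ^+ l * elev_weight R l k a b =
    coef * (\prod_i ((a i : nat) ^_ (b i : nat)))%:R.
  rewrite /elev_weight /binom_prod prodf_div -!natr_prod /coef.
  by field; rewrite fb_neq0 kl_neq0 ff_neq0.
rewrite bern_grid weight_grid; apply: ler_wpM2l.
  by rewrite /coef divr_ge0 ?mulr_ge0 ?exprn_ge0 ?ler0n.
by rewrite ler_nat; apply: leq_prod => i _; exact: (ffact_le_exp (a i) (b i)).
Qed.

(* k^_l / k^l >= 1 - l(l-1)/(2k), by induction on l using (1-s)(1-u) >= 1-s-u. *)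
Lemma ffact_ratio_ge k l : (0 < k)%N -> (l <= k)%N ->
  1 - (l * (l - 1))%:R / (2 * k%:R) <= (k ^_ l)%:R / k%:R ^+ l :> R.
Proof.
move=> hk; elim: l => [|l IH] hl.
  by rewrite mul0n mul0r subr0 ffactn0 expr0 divr1.
have k_gt0 : 0 < k%:R :> R by rewrite ltr0n.
set s := (l * (l - 1))%:R / (2 * k%:R) : R.
set u := l%:R / k%:R : R.
have s_ge0 : 0 <= s by rewrite /s divr_ge0 ?mulr_ge0 ?ler0n.
have u_ge0 : 0 <= u by rewrite /u divr_ge0 ?ler0n.
have u_le1 : u <= 1 by rewrite /u ler_pdivrMr // mul1r ler_nat ltnW.
have next_s : (l.+1 * (l.+1 - 1))%:R / (2 * k%:R) = s + u :> R.
  have -> : (l.+1 * (l.+1 - 1) = l * (l - 1) + 2 * l)%N by nia.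
  by rewrite natrD natrM /s /u; field; rewrite gt_eqF.
have next_ratio : (k ^_ l.+1)%:R / k%:R ^+ l.+1 = (k ^_ l)%:R / k%:R ^+ l * (1 - u) :> R.
  rewrite ffactnSr natrM natrB; last exact: ltnW.
  rewrite exprSr /u.
  have kl_neq0 : k%:R ^+ l != 0 :> R by rewrite gt_eqF // exprn_gt0.
  by field; rewrite kl_neq0 gt_eqF.
rewrite next_s next_ratio.
apply: le_trans (_ : (1 - s) * (1 - u) <= _).
  have := mulr_ge0 s_ge0 u_ge0; rewrite mulrBl !mul1r mulrBr mulr1.
  lra.
by rewrite ler_wpM2r ?subr_ge0 // IH // ltnW.
Qed.

End GridPoints.

(* Elevation of Bernstein coefficients: by uniqueness, the degree-k
   coefficients of a function with degree-l coefficients bl are the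
   elevated ones. *)
Lemma bern_coefs_elevate (R : realFieldType) n l k (f : 'rV[R]_n -> R)
    (bl : mindex n l -> R) (bk : mindex n k -> R) (a : mindex n k) :
  bernstein_coeffs f bl -> bernstein_coeffs f bk -> (l <= k)%N -> mdeg a == k ->
  bk a = \sum_(b : mindex n k | mdeg b == l) bl (recast l b) * elev_weight R l k a b.
Proof.
move=> fl fk hlk ha; apply/eqP; rewrite -subr_eq0; apply/eqP.
apply: (@bern_coefs_unique R n k (fun a => bk a - _)) ha => x.
under eq_bigr do rewrite mulrBl.
rewrite sumrB; apply/eqP; rewrite subr_eq0; apply/eqP.
rewrite -(bern_elevate _ (sum_bary x)); last by rewrite hlk leqnn.
by rewrite -(sum_bern_recast _ _ hlk) -fl -fk.
Qed.

(* The elevation weights of a degree-k multi-index sum to one (elevate the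
   constant function 1, whose coefficients are all 1). *)
Lemma elev_weight_sum1 (R : realFieldType) n l k (a : mindex n k) :
  (l <= k)%N -> mdeg a == k ->
  \sum_(b : mindex n k | mdeg b == l) elev_weight R l k a b = 1.
Proof.
move=> hlk ha.
have one_coefs m : bernstein_coeffs (fun _ : 'rV[R]_n => 1) (fun _ : mindex n m => 1).
  move=> x; under eq_bigr do rewrite mul1r.
  by rewrite [RHS](bern_partition_unity (K := m)) ?sum_bary.
have := bern_coefs_elevate (one_coefs l) (one_coefs k) hlk ha.
by under eq_bigr do rewrite mul1r; move->.
Qed.

Section CoefficientPositivity.
Variables (R : realFieldType) (n l k : nat) (p : 'rV[R]_n -> R).
Variables (bpl : mindex n l -> R) (bpk : mindex n k -> R) (pmin : R).
Hypothesis p_coefs_l : bernstein_coeffs p bpl.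
Hypothesis p_coefs_k : bernstein_coeffs p bpk.

Definition max_abs_coef : R := \big[Num.max/0]_(a : mindex n l | mdeg a == l) `|bpl a|.
Local Notation M := max_abs_coef.

Lemma abs_coef_le_max (a : mindex n l) : mdeg a == l -> `|bpl a| <= M.
Proof. exact: le_bigmax_cond. Qed.

Lemma max_abs_coef_ge0 : 0 <= M.
Proof. exact: bigmax_ge_id. Qed.

(* p is bounded by M on the simplex, since the B^l_b form a partition of unity. *)
Lemma value_le_max_abs_coef x : in_simplex x -> p x <= M.
Proof.
move=> hx; rewrite p_coefs_l.
apply: le_trans (_ : \sum_(b : mindex n l | mdeg b == l) M * bern l b (bary x) <= _).
  apply: ler_sum => b hb; apply: ler_wpM2r; first exact: bern_ge0.
  exact: le_trans (ler_norm _) (abs_coef_le_max hb).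
by rewrite -mulr_sumr (bern_partition_unity (leqnn l) (sum_bary x)) mulr1.
Qed.

Hypothesis k_gt0 : (0 < k)%N.
Hypothesis l_le_k : (l <= k)%N.
Hypothesis pmin_le : forall x, in_simplex x -> pmin <= p x.
Hypothesis k_large : M * ((l * (l - 1))%:R / (2 * k%:R)) < pmin.

(* With c = k^_l / k^l, V_b = B^l_b(a/k) and W_b = W^k(a,b):
   pmin - c bpk(a) <= p(a/k) - c bpk(a) = sum_b bpl(b) (V_b - c W_b)
   <= M (1 - c) <= M l(l-1)/(2k) < pmin. *)
Lemma bern_coefs_pos (a : mindex n k) : mdeg a == k -> 0 < bpk a.
Proof.
move=> ha; have deg_a : mdeg a = k by apply/eqP.
set c := (k ^_ l)%:R / k%:R ^+ l : R.
have c_gt0 : 0 < c by rewrite divr_gt0 ?exprn_gt0 ?ltr0n ?ffact_gt0.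
set V := fun b : mindex n k => bern l b (bary (grid_point R a)).
set W := fun b : mindex n k => elev_weight R l k a b.
set c0 := fun b : mindex n k => bpl (recast l b).
have V_sum1 : \sum_(b : mindex n k | mdeg b == l) V b = 1.
  by rewrite bern_partition_unity ?sum_bary.
have p_grid : p (grid_point R a) = \sum_(b : mindex n k | mdeg b == l) c0 b * V b.
  by rewrite p_coefs_l (sum_bern_recast _ _ l_le_k).
have bpk_a : bpk a = \sum_(b : mindex n k | mdeg b == l) c0 b * W b.
  exact: bern_coefs_elevate.
have c0_le b : mdeg b == l -> `|c0 b| <= M.
  move=> /eqP hb; apply: abs_coef_le_max; apply/eqP; rewrite -[RHS]hb.
  by apply: mdeg_ext => i; rewrite recastE // -hb le_mdeg.
have gap : p (grid_point R a) - c * bpk a <= M * (1 - c).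
  have -> : M * (1 - c) = \sum_(b : mindex n k | mdeg b == l) M * (V b - c * W b).
    by rewrite -mulr_sumr sumrB -mulr_sumr V_sum1 elev_weight_sum1 // mulr1.
  have -> : p (grid_point R a) - c * bpk a =
      \sum_(b : mindex n k | mdeg b == l) c0 b * (V b - c * W b).
    rewrite p_grid bpk_a mulr_sumr -sumrB; apply: eq_bigr => b _.
    by rewrite mulrBr [c * (c0 b * W b)]mulrCA.
  apply: ler_sum => b hb; apply: ler_wpM2r.
    by rewrite subr_ge0 elev_weight_le_bern //; apply/eqP.
  exact: le_trans (ler_norm _) (c0_le b hb).
have c_close : M * (1 - c) <= M * ((l * (l - 1))%:R / (2 * k%:R)).
  by rewrite ler_wpM2l ?max_abs_coef_ge0 // lerBlDr addrC -lerBlDr ffact_ratio_ge.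
have pmin_le_grid := pmin_le (grid_point_in_simplex R k_gt0 deg_a).
have := le_lt_trans gap (le_lt_trans c_close (lt_le_trans k_large pmin_le_grid)).
by rewrite ltrBlDr ltrDl pmulr_rgt0.
Qed.

End CoefficientPositivity.

(* The degree condition of the corollary: if 0 < pmin <= M and
   k > l(l-1)/2 * M / pmin, then k > 0, k >= l (since M/pmin >= 1 and
   l(l-1)/2 >= l - 1) and M l(l-1)/(2k) < pmin. *)
Lemma large_degree (R : realFieldType) (l k : nat) (M pmin : R) :
  0 < pmin -> pmin <= M ->
  (l * (l - 1))%:R / 2%:R * M / pmin < k%:R ->
  [/\ (0 < k)%N, (l <= k)%N & M * ((l * (l - 1))%:R / (2 * k%:R)) < pmin].
Proof.
move=> pmin_gt0 pmin_le_M hk.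
set A := (l * (l - 1))%:R : R.
have ratio_ge1 : 1 <= M / pmin by rewrite ler_pdivlMr // mul1r.
have A2_le : A / 2%:R <= A / 2%:R * (M / pmin).
  by rewrite -[X in X <= _]mulr1 ler_wpM2l // divr_ge0 ?ler0n.
have hk' : A / 2%:R < k%:R by apply: le_lt_trans A2_le _; rewrite mulrA.
have k_gt0 : (0 < k)%N.
  by rewrite -(ltr0n R); apply: le_lt_trans hk'; rewrite divr_ge0 ?ler0n.
split => //.
  have [l_le1|l_gt1] := leqP l 1; first exact: leq_trans l_le1 k_gt0.
  have : (l - 1)%:R < k%:R :> R.
    apply: le_lt_trans hk'.
    by rewrite ler_pdivlMr ?ltr0n // mulrC -natrM ler_nat /A leq_mul2r l_gt1 orbT.
  by rewrite ltr_nat; lia.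
have k_pos : 0 < k%:R :> R by rewrite ltr0n.
have -> : M * (A / (2 * k%:R)) = (A / 2%:R * M / pmin) * (pmin / k%:R).
  by field; rewrite !gt_eqF.
by rewrite -ltr_pdivlMr ?divr_gt0 // invf_div mulrCA divff ?gt_eqF // mulr1.
Qed.

Unset Implicit Arguments.
Set Strict Implicit.

Theorem corollary5p14 (R : realFieldType) (n l k : nat)
    (p q : 'rV[R]_n -> R)
    (bpl : mindex n l -> R) (bpk : mindex n k -> R)
    (bq : forall j : nat, mindex n j -> R) (pmin : R) :
  bernstein_coeffs p bpl ->
  bernstein_coeffs p bpk ->
  (forall j, (l <= j)%N -> bernstein_coeffs q (bq j)) ->
  (forall j, (l <= j)%N -> forall a : mindex n j, mdeg a == j -> 0 < bq j a) ->
  (forall x, in_simplex x -> 0 < p x / q x) ->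
  (forall x, in_simplex x -> 0 < p x) ->
  is_min_on_simplex p pmin ->
  (l * (l - 1))%:R / 2%:R
    * (\big[Num.max/0]_(a : mindex n l | mdeg a == l) `|bpl a|) / pmin
    < k%:R ->
  (forall a : mindex n k, mdeg a == k -> 0 <= bpk a / bq k a) /\
  (forall i : 'I_n.+1, 0 < bpk (mvertex k i) / bq k (mvertex k i)).
Proof.
move=> p_coefs_l p_coefs_k _ q_coefs_pos _ p_pos [[x0 x0_in p_x0] pmin_le] hk.
rewrite -/(max_abs_coef bpl) in hk.
have pmin_gt0 : 0 < pmin by rewrite -p_x0 p_pos.
have pmin_le_M : pmin <= max_abs_coef bpl.
  by rewrite -p_x0; exact: value_le_max_abs_coef.
have [k_gt0 l_le_k k_large] := large_degree pmin_gt0 pmin_le_M hk.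
have bpk_pos a : mdeg a == k -> 0 < bpk a.
  exact: bern_coefs_pos p_coefs_l p_coefs_k k_gt0 l_le_k pmin_le k_large a.
have ratio_pos a : mdeg a == k -> 0 < bpk a / bq k a.
  by move=> ha; rewrite divr_gt0 ?bpk_pos ?q_coefs_pos.
split => [a /ratio_pos /ltW // | i]; apply: ratio_pos.
rewrite /mdeg (bigD1 i) //= big1 => [|j /negbTE hj]; last by rewrite ffunE hj.
by rewrite ffunE eqxx addn0.
Qed.
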